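(* Let $\mathbb{S}\in\mathbb{Z}^{N_X\times N_e}$, $\mathcal{X}=\mathbb{R}^{N_X}_{>0}$, $\Phi$ a primal thermodynamic function on $\mathcal{X}$ with Legendre conjugate $\Phi^*$, $\tilde{x}\in\mathcal{X}$, and $\{\Psi^*_x\}_{x\in\mathcal{X}}$ a family of dissipation functions on $\mathbb{R}^{N_e}$. Consider the equilibrium flow $$\dot{x}=-\mathbb{S}\,\nabla\Psi^*_x\Big(\mathbb{S}^T\big(\nabla\Phi(x)-\nabla\Phi(\tilde{x})\big)\Big)$$ with initial state $x(0)=x_0\in\mathcal{X}$, flux $j(x)=\nabla\Psi^*_x(\mathbb{S}^T(\nabla\Phi(x)-\nabla\Phi(\tilde x)))$. Define $\mathcal{P}^{sc}(x_0):=\{x\in\mathcal{X}:x-x_0\in\mathrm{Im}\,\mathbb{S}\}$ (the set in which the trajectory from $x_0$ stays), $\mathcal{M}^{eq}(\tilde{x}):=\{x\in\mathcal{X}:\nabla\Phi(x)-\nabla\Phi(\tilde{x})\in\mathrm{Ker}\,\mathbb{S}^T\}$, and $\mathcal{M}^{\mathrm{DB}}:=\{x\in\mathcal{X}:j(x)=0\}$. Then the steady state $x_{eq}$ of the flow started from $x_0$ (the equilibrium state) is the point $x^\dagger$ forming the intersection $\mathcal{P}^{sc}(x_0)\cap\mathcal{M}^{eq}(\tilde{x})$; hence it exists and is unique for each pair $(x_0,\tilde{x})$. Moreover, $$x_{eq}=\arg\min_{x\in\mathcal{P}^{sc}(x_0)}\mathcal{D}_\Phi[x\|\tilde{x}]=\arg\min_{x_q\in\mathcal{M}^{eq}(\tilde{x})}\mathcal{D}_\Phi[x_0\|x_q],$$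 and $\mathcal{M}^{eq}(\tilde{x})=\mathcal{M}^{\mathrm{DB}}$.
   Context: A primal thermodynamic function is a strictly convex differentiable $\Phi:\mathcal{X}\to\mathbb{R}$ such that $\{\nabla\Phi(x):x\in\mathcal{X}\}=\mathbb{R}^{N_X}$ and, for every $x_{in}\in\mathcal{X}$ and $x_{bd}\in\mathbb{R}^{N_X}_{\ge0}\setminus\mathcal{X}$, $\lim_{\lambda\to0^+}\frac{d}{d\lambda}\Phi(\lambda x_{in}+(1-\lambda)x_{bd})=-\infty$. $\Phi^*(y)=\max_{x\in\mathcal{X}}[\langle x,y\rangle-\Phi(x)]$ on $\mathbb{R}^{N_X}$, and $\nabla\Phi,\nabla\Phi^*$ are mutually inverse bijections between $\mathcal{X}$ and $\mathbb{R}^{N_X}$. The Bregman divergence is $\mathcal{D}_\Phi[x\|x']=\Phi(x)-\Phi(x')-\langle x-x',\nabla\Phi(x')\rangle$. A dissipation function on $\mathbb{R}^{N_e}$ is a strictly convex, continuously differentiable, $1$-coercive ($\psi(f)/\|f\|\to\infty$), even function $\psi$ with $\psi(0)=0$. A steady state is a point where $\dot{x}=0$. *)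

From HB Require Import structures.
From mathcomp Require Import all_boot all_order all_algebra.
From mathcomp Require Import all_classical all_reals all_analysis.
Set Implicit Arguments. Unset Strict Implicit. Unset Printing Implicit Defensive.
Import Order.TTheory GRing.Theory Num.Theory.
Import numFieldNormedType.Exports.
Local Open Scope classical_set_scope.
Local Open Scope ring_scope.

Section Defs.
Variable R : realType.

Definition dotv (n : nat) (x y : 'cV[R]_n) : R := \sum_(i < n) x i 0 * y i 0.

Definition posorth (n : nat) : set 'cV[R]_n := [set x | forall i, 0 < x i 0].
Definition nnegorth (n : nat) : set 'cV[R]_n := [set x | forall i, 0 <= x i 0].

Definition grad (n : nat) (f : 'cV[R]_n -> R) (x : 'cV[R]_n) : 'cV[R]_n :=
  \col_(i < n) ('d f x (delta_mx i 0 : 'cV[R]_n)).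

Definition strictly_convex_on (n : nat) (D : set 'cV[R]_n) (f : 'cV[R]_n -> R) :=
  forall x y, D x -> D y -> x != y -> forall t : R, 0 < t < 1 ->
    f (t *: x + (1 - t) *: y) < t * f x + (1 - t) * f y.

Definition primal_thermodynamic (n : nat) (Phi : 'cV[R]_n -> R) : Prop :=
  [/\ strictly_convex_on (@posorth n) Phi,
      (forall x, @posorth n x -> differentiable Phi x),
      (forall y : 'cV[R]_n, exists2 x, @posorth n x & grad Phi x = y) &
      (forall xin xbd, @posorth n xin -> @nnegorth n xbd -> ~ @posorth n xbd ->
         (fun l : R => derive1 (fun m : R => Phi (m *: xin + (1 - m) *: xbd)) l)
           @ (0 : R)^'+ --> -oo)].

Definition bregman (n : nat) (Phi : 'cV[R]_n -> R) (x x' : 'cV[R]_n) : R :=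
  Phi x - Phi x' - dotv (x - x') (grad Phi x').

(* dissipation function on R^m (norm: the library's matrix norm; all norms
   on R^m are equivalent, so 1-coercivity does not depend on the choice) *)
Definition dissipation (m : nat) (Psi : 'cV[R]_m -> R) : Prop :=
  [/\ strictly_convex_on setT Psi,
      (forall f, differentiable Psi f),
      continuous (grad Psi),
      (forall M : R, exists r : R, forall f, r <= `|f| -> M <= Psi f / `|f|) &
      ((forall f, Psi (- f) = Psi f) /\ Psi 0 = 0)].

Definition realmx (n m : nat) (S : 'M[int]_(n, m)) : 'M[R]_(n, m) :=
  map_mx (fun z : int => z%:~R) S.

Definition flux (n m : nat) (S : 'M[int]_(n, m)) (Phi : 'cV[R]_n -> R)
  (Psi : 'cV[R]_n -> 'cV[R]_m -> R) (xt x : 'cV[R]_n) : 'cV[R]_m :=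
  grad (Psi x) ((realmx S)^T *m (grad Phi x - grad Phi xt)).

Definition eqflow (n m : nat) (S : 'M[int]_(n, m)) (Phi : 'cV[R]_n -> R)
  (Psi : 'cV[R]_n -> 'cV[R]_m -> R) (xt x : 'cV[R]_n) : 'cV[R]_n :=
  - (realmx S *m flux S Phi Psi xt x).

Definition steady_state (n m : nat) (S : 'M[int]_(n, m)) (Phi : 'cV[R]_n -> R)
  (Psi : 'cV[R]_n -> 'cV[R]_m -> R) (xt : 'cV[R]_n) : set 'cV[R]_n :=
  [set x | @posorth n x /\ eqflow S Phi Psi xt x = 0].

Definition Psc (n m : nat) (S : 'M[int]_(n, m)) (x0 : 'cV[R]_n) : set 'cV[R]_n :=
  [set x | @posorth n x /\ exists v : 'cV[R]_m, x - x0 = realmx S *m v].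

Definition Meq (n m : nat) (S : 'M[int]_(n, m)) (Phi : 'cV[R]_n -> R)
  (xt : 'cV[R]_n) : set 'cV[R]_n :=
  [set x | @posorth n x /\ (realmx S)^T *m (grad Phi x - grad Phi xt) = 0].

Definition MDB (n m : nat) (S : 'M[int]_(n, m)) (Phi : 'cV[R]_n -> R)
  (Psi : 'cV[R]_n -> 'cV[R]_m -> R) (xt : 'cV[R]_n) : set 'cV[R]_n :=
  [set x | @posorth n x /\ flux S Phi Psi xt x = 0].

End Defs.
Arguments posorth {R} n _.
Arguments nnegorth {R} n _.

From Pilot Require Import Defs.
From HB Require Import structures.
From mathcomp Require Import all_boot all_order all_algebra.
From mathcomp Require Import all_classical all_reals all_analysis.
From mathcomp Require Import ring lra.
Import Order.TTheory GRing.Theory Num.Theory.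
Import numFieldNormedType.Exports.
Local Open Scope classical_set_scope.
Local Open Scope ring_scope.
Set Implicit Arguments. Unset Strict Implicit.

(* f x := D_Phi[x || xt] is convex and coercive on the open orthant, so
   near-minimisers of f on the stoichiometric class P^sc(x0) cluster at a point xs
   of the closed orthant lying in the (closed) affine class.  xs is not on the
   boundary: along the segment from xs to x0, f is convex and squeezed between
   inf f and a chord through inf f, so its slope is nonnegative, whereas the
   derivative of Phi along such a segment tends to -oo.  The first-order
   condition at the minimiser says that grad Phi xs - grad Phi xt is orthogonal to
   Im S, i.e. xs lies in M^eq(xt).  The three-point identity of Bregman
   divergences together with Im S _|_ Ker S^T gives two Pythagorean equalities,
   hence both minimality statements and uniqueness.  Finally <u, grad Psi u> > 0
   for u <> 0, so S (grad Psi u) = 0 or grad Psi u = 0 forces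
   u = S^T (grad Phi x - grad Phi xt) = 0: steady states and detailed-balance
   points both form M^eq(xt). *)

Section inner_product.
Variables (R : realType) (n : nat).
Implicit Types x y z : 'cV[R]_n.

Lemma dotvE x y : dotv x y = (x^T *m y) 0 0.
Proof. by rewrite /dotv mxE; apply: eq_bigr => i _; rewrite mxE. Qed.

Lemma dotvDl x y z : dotv (x + y) z = dotv x z + dotv y z.
Proof. by rewrite !dotvE linearD /= mulmxDl mxE. Qed.

Lemma dotvDr x y z : dotv x (y + z) = dotv x y + dotv x z.
Proof. by rewrite !dotvE mulmxDr mxE. Qed.

Lemma dotvZl (a : R) x y : dotv (a *: x) y = a * dotv x y.
Proof. by rewrite !dotvE linearZ /= -scalemxAl mxE. Qed.

Lemma dotvNl x y : dotv (- x) y = - dotv x y.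
Proof. by rewrite -scaleN1r dotvZl mulN1r. Qed.

Lemma dotvNr x y : dotv x (- y) = - dotv x y.
Proof. by rewrite !dotvE mulmxN mxE. Qed.

Lemma dotvBl x y z : dotv (x - y) z = dotv x z - dotv y z.
Proof. by rewrite dotvDl dotvNl. Qed.

Lemma dotvBr x y z : dotv x (y - z) = dotv x y - dotv x z.
Proof. by rewrite dotvDr dotvNr. Qed.

Lemma dotv0r x : dotv x 0 = 0.
Proof. by rewrite dotvE mulmx0 mxE. Qed.

Lemma dotvv_eq0 x : dotv x x = 0 -> x = 0.
Proof.
move=> /eqP; rewrite psumr_eq0 => [/allP x0|i _]; last by rewrite -expr2 sqr_ge0.
apply/matrixP => i j; rewrite (ord1 j) mxE.
by have := x0 i (mem_index_enum _); rewrite /= mulf_eq0 orbb => /eqP.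
Qed.

Lemma diff_grad (f : 'cV[R]_n -> R) x v : 'd f x v = dotv v (grad f x).
Proof.
rewrite {1}(matrix_sum_delta v) linear_sum /dotv; apply: eq_bigr => i _.
by rewrite big_ord1 linearZ /= mxE.
Qed.

Lemma dotv_continuous z : continuous (fun x => dotv x z).
Proof.
move=> x; rewrite /continuous_at /dotv; elim: (index_enum _) => [|i s IH].
  rewrite big_nil; under eq_cvg do rewrite big_nil.
  exact: (@cvg_cst _ (0 : R) _ (nbhs x) _).
rewrite big_cons; under eq_cvg do rewrite big_cons.
apply: cvgD IH.
exact: (@cvgMr_tmp _ _ (nbhs x) _ _ _ _ (@coord_continuous R n 1 i 0 x)).
Qed.

End inner_product.

Lemma dotv_mulmx (R : realType) n m (A : 'M[R]_(n, m)) u w :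
  dotv (A *m u) w = dotv u (A^T *m w).
Proof. by rewrite !dotvE trmx_mul -mulmxA. Qed.

Lemma mulmx_tr_eq0 (R : realType) n m (A : 'M[R]_(n, m)) g :
  (forall u, 0 <= dotv (A *m u) g) -> A^T *m g = 0.
Proof.
move=> Ag; apply: dotvv_eq0; apply/eqP; rewrite eq_le.
have := Ag (- (A^T *m g)); rewrite dotv_mulmx dotvNl oppr_ge0 => -> /=.
by rewrite -dotv_mulmx.
Qed.

Lemma dotv_image_ker (R : realType) n m (A : 'M[R]_(n, m)) (v : 'cV[R]_m) g :
  A^T *m g = 0 -> dotv (A *m v) g = 0.
Proof. by move=> Ag; rewrite dotv_mulmx Ag dotv0r. Qed.

Lemma dotv_mulmx_ker (R : realType) n m (A : 'M[R]_(n, m)) g j :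
  A *m j = 0 -> dotv (A^T *m g) j = 0.
Proof. by rewrite dotv_mulmx trmxK => ->; rewrite dotv0r. Qed.

Lemma mulmx_subr_eq0 (R : realType) n m (B : 'M[R]_(m, n)) (g h k : 'cV[R]_n) :
  B *m (g - k) = 0 -> B *m (h - k) = 0 -> B *m (g - h) = 0.
Proof.
move=> Bg Bh; have -> : g - h = (g - k) - (h - k) by rewrite opprB addrA subrK.
by rewrite mulmxBr Bg Bh subrr.
Qed.

Lemma at_right_dnbhs (R : realType) (a : R) : a^'+ `=>` a^'.
Proof.
by move=> A [e e0 Ae]; exists e => // x xe xa; apply: Ae => //; rewrite gt_eqF.
Qed.

Lemma near_right_lt1 (R : realType) : \forall t \near (0 : R)^'+, 0 < t < 1.
Proof.
near=> t; apply/andP; split.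
  by near: t; exact: nbhs_right_gt.
by near: t; exact: nbhs_right_lt.
Unshelve. all: by end_near. Qed.

Section directional_derivative.
Variables (R : realType) (n : nat).
Implicit Types (f : 'cV[R]_n -> R) (x w : 'cV[R]_n).

Lemma cvg_diff_quotient f x w : differentiable f x ->
  (fun t : R => t^-1 * (f (x + t *: w) - f x)) @ 0^'+ --> 'd f x w.
Proof.
move=> df; rewrite -(deriveE w df).
have -> : (fun t : R => t^-1 * (f (x + t *: w) - f x)) =
    (fun h => h^-1 *: ((f \o shift x) (h *: w) - f x)).
  by apply/funext => t /=; rewrite [t *: w + x]addrC.
exact: cvg_trans (cvg_app _ (@at_right_dnbhs R 0)) (diff_derivable df).
Qed.

Lemma diff_le_slope f x w (K : R) : differentiable f x ->
  (\forall t \near 0^'+, f (x + t *: w) <= f x + t * K) -> 'd f x w <= K.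
Proof.
move=> df fK.
suff : \forall t \near 0^'+, t^-1 * (f (x + t *: w) - f x) <= K.
  by apply: cvgr_to_le; exact: cvg_diff_quotient.
near=> t.
have t0 : 0 < t by near: t; exact: nbhs_right_gt.
have ft : f (x + t *: w) <= f x + t * K by near: t; exact: fK.
by rewrite ler_pdivrMl //; lra.
Unshelve. all: by end_near. Qed.

Lemma diff_ge_slope f x w (K : R) : differentiable f x ->
  (\forall t \near 0^'+, f x + t * K <= f (x + t *: w)) -> K <= 'd f x w.
Proof.
move=> df fK.
suff : \forall t \near 0^'+, K <= t^-1 * (f (x + t *: w) - f x).
  by apply: cvgr_to_ge; exact: cvg_diff_quotient.
near=> t.
have t0 : 0 < t by near: t; exact: nbhs_right_gt.
have ft : f x + t * K <= f (x + t *: w) by near: t; exact: fK.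
by rewrite ler_pdivlMl //; lra.
Unshelve. all: by end_near. Qed.

End directional_derivative.

Section strict_convexity.
Variables (R : realType) (n : nat) (D : set 'cV[R]_n) (f : 'cV[R]_n -> R).
Hypothesis convex_f : strictly_convex_on D f.
Implicit Types x y : 'cV[R]_n.

Lemma strictly_convex_le x y (t : R) : D x -> D y -> 0 <= t <= 1 ->
  f (t *: x + (1 - t) *: y) <= t * f x + (1 - t) * f y.
Proof.
move=> Dx Dy /andP[t0 t1].
have [<-|xy] := eqVneq x y.
  by rewrite -scalerDl -mulrDl addrC subrK scale1r mul1r.
have [->|tn0] := eqVneq t 0.
  by rewrite scale0r add0r subr0 scale1r mul0r add0r mul1r.
have [->|tn1] := eqVneq t 1.
  by rewrite scale1r subrr scale0r addr0 mul1r mul0r addr0.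
by apply/ltW/convex_f; rewrite // !lt_neqAle eq_sym tn0 tn1 t0 t1.
Qed.

Lemma strictly_convex_tangent_le x y : D x -> D y -> differentiable f x ->
  f x + 'd f x (y - x) <= f y.
Proof.
move=> Dx Dy df; rewrite -lerBrDl; apply: diff_le_slope => //; near=> t.
have /andP[t0 t1] : 0 < t < 1 by near: t; exact: near_right_lt1.
have -> : x + t *: (y - x) = t *: y + (1 - t) *: x.
  by rewrite scalerBr scalerBl scale1r addrCA addrA.
have t01 : 0 <= t <= 1 by rewrite !ltW.
have := strictly_convex_le Dy Dx t01; lra.
Unshelve. all: by end_near. Qed.

Lemma strictly_convex_tangent_lt x y :
  (forall t : R, 0 <= t <= 1 -> D (t *: y + (1 - t) *: x)) ->
  D x -> D y -> differentiable f x -> x != y -> f x + 'd f x (y - x) < f y.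
Proof.
move=> Dxy Dx Dy df xy.
have half01 : 0 < (1 / 2 : R) < 1 by apply/andP; split; lra.
have Dw : D ((1 / 2) *: y + (1 - 1 / 2) *: x).
  by apply: Dxy; case/andP: half01 => h0 h1; rewrite !ltW.
have mid : (1 / 2) *: y + (1 - 1 / 2) *: x - x = (1 / 2) *: (y - x) :> 'cV[R]_n.
  by apply/matrixP => i j; rewrite !mxE; ring.
have tangent : f x + 1 / 2 * 'd f x (y - x) <= f ((1 / 2) *: y + (1 - 1 / 2) *: x).
  by have := strictly_convex_tangent_le Dx Dw df; rewrite mid linearZ.
have yx : y != x by rewrite eq_sym.
have chord := convex_f Dy Dx yx half01.
lra.
Qed.

End strict_convexity.

Section dissipation_function.
Variables (R : realType) (m : nat) (Psi : 'cV[R]_m -> R).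
Hypothesis dissipation_Psi : dissipation Psi.
Implicit Types v : 'cV[R]_m.

Lemma oppv_neq v : v != 0 -> v != - v.
Proof.
by rewrite -addr_eq0 -mulr2n -scaler_nat scaler_eq0 pnatr_eq0 => /negbTE->.
Qed.

Lemma dissipation_gt0 v : v != 0 -> 0 < Psi v.
Proof.
case: dissipation_Psi => convex_Psi _ _ _ [even_Psi Psi0] v0.
have half01 : 0 < (1 / 2 : R) < 1 by apply/andP; split; lra.
have := convex_Psi v (- v) I I (oppv_neq v0) _ half01.
rewrite even_Psi scalerN (_ : 1 - 1 / 2 = 1 / 2 :> R) ?subrr ?Psi0; lra.
Qed.

Lemma dissipation_ge0 v : 0 <= Psi v.
Proof.
have [->|v0] := eqVneq v 0; last exact/ltW/dissipation_gt0.
by case: dissipation_Psi => _ _ _ _ [_ ->].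
Qed.

Lemma grad_dissipation0 : grad Psi 0 = 0.
Proof.
case: dissipation_Psi => _ dPsi _ _ [_ Psi0].
have slope_ge0 w : 0 <= 'd Psi 0 w.
  apply: diff_ge_slope => //; apply: filterE => t.
  by rewrite Psi0 mulr0 addr0 dissipation_ge0.
apply/matrixP => i j; rewrite !mxE; apply/eqP; rewrite eq_le slope_ge0 andbT.
by rewrite -oppr_ge0 -linearN slope_ge0.
Qed.

Lemma dotv_grad_dissipation_eq0 v : dotv v (grad Psi v) = 0 -> v = 0.
Proof.
case: dissipation_Psi => convex_Psi dPsi _ _ [_ Psi0] vPsi.
apply/eqP; apply: contraT => v0.
have := strictly_convex_tangent_lt convex_Psi (fun _ _ => I) I I (dPsi v) v0.
rewrite Psi0 sub0r linearN /= diff_grad vPsi.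
have := dissipation_gt0 v0; lra.
Qed.

End dissipation_function.

Lemma posorth_convex (R : realType) n (x y : 'cV[R]_n) (t : R) :
  posorth n x -> posorth n y -> 0 <= t <= 1 -> posorth n (t *: x + (1 - t) *: y).
Proof. by move=> px py /andP[t0 t1] i; rewrite !mxE; have := px i; have := py i; nra. Qed.

Lemma posorth_segment (R : realType) n (x y : 'cV[R]_n) (l : R) :
  posorth n x -> nnegorth n y -> 0 < l <= 1 -> posorth n (l *: x + (1 - l) *: y).
Proof. by move=> px ny /andP[l0 l1] i; rewrite !mxE; have := px i; have := ny i; nra. Qed.

Lemma bregman_three_point (R : realType) n (Phi : 'cV[R]_n -> R) x y z :
  bregman Phi x z =
    bregman Phi x y + bregman Phi y z + dotv (x - y) (grad Phi y - grad Phi z).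
Proof.
rewrite /bregman !(dotvBl, dotvBr).
move: (grad Phi y) (grad Phi z) => gy gz; lra.
Qed.

Lemma bregman_pythagoras (R : realType) n (Phi : 'cV[R]_n -> R) x y z :
  dotv (x - y) (grad Phi y - grad Phi z) = 0 ->
  bregman Phi x z = bregman Phi x y + bregman Phi y z.
Proof. by move=> orth; rewrite (bregman_three_point _ x y z) orth addr0. Qed.

Section primal_thermodynamic_function.
Variables (R : realType) (n : nat) (Phi : 'cV[R]_n -> R).
Hypothesis thermo_Phi : primal_thermodynamic Phi.
Implicit Types x y z : 'cV[R]_n.

Lemma thermodynamic_differentiable x : posorth n x -> differentiable Phi x.
Proof. by case: thermo_Phi => _ dPhi _ _; exact: dPhi. Qed.

Lemma bregman_ge0 x y : posorth n x -> posorth n y -> 0 <= bregman Phi x y.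
Proof.
case: thermo_Phi => convex_Phi _ _ _ px py.
have := strictly_convex_tangent_le convex_Phi py px (thermodynamic_differentiable py).
by rewrite diff_grad /bregman; lra.
Qed.

Lemma bregman_gt0 x y : posorth n x -> posorth n y -> x != y -> 0 < bregman Phi x y.
Proof.
case: thermo_Phi => convex_Phi _ _ _ px py xy.
have yx : y != x by rewrite eq_sym.
have := strictly_convex_tangent_lt convex_Phi (fun t => posorth_convex px py) py px
  (thermodynamic_differentiable py) yx.
by rewrite diff_grad /bregman; lra.
Qed.

Lemma bregman_convex z x y (t : R) : posorth n x -> posorth n y -> 0 <= t <= 1 ->
  bregman Phi (t *: x + (1 - t) *: y) z <= t * bregman Phi x z + (1 - t) * bregman Phi y z.
Proof.
case: thermo_Phi => convex_Phi _ _ _ px py t01.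
have := strictly_convex_le convex_Phi px py t01.
rewrite /bregman !(dotvBl, dotvDl, dotvZl); nra.
Qed.

Lemma bregman_continuous z x : posorth n x ->
  (fun y => bregman Phi y z) @ x --> bregman Phi x z.
Proof.
move=> px; rewrite /bregman dotvBl; under eq_cvg do rewrite dotvBl.
have cst (c : R) : (fun=> c) @ x --> c := @cvg_cst _ _ _ (nbhs x) (nbhs_filter x).
have PhiC : Phi @ x --> Phi x.
  exact: differentiable_continuous (thermodynamic_differentiable px).
have dotvC : (fun y => dotv y (grad Phi z)) @ x --> dotv x (grad Phi z).
  exact: dotv_continuous.
exact: cvgB (cvgB PhiC (cst _)) (cvgB dotvC (cst _)).
Qed.

(* Phi lies above its tangent plane at a point y with grad Phi y = grad Phi z + 1. *)
Lemma bregman_coercive z :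
  exists c, forall x i, posorth n x -> x i 0 <= bregman Phi x z + c.
Proof.
case: thermo_Phi => convex_Phi _ grad_onto _.
have [y py gy] := grad_onto (grad Phi z + const_mx 1).
exists (Phi z - Phi y + dotv y (grad Phi z + const_mx 1) - dotv z (grad Phi z)) => x i px.
have := strictly_convex_tangent_le convex_Phi py px (thermodynamic_differentiable py).
have xi_le : x i 0 <= dotv x (const_mx 1).
  rewrite /dotv (bigD1 i) //= mxE mulr1 lerDl.
  by apply: sumr_ge0 => j _; rewrite mxE mulr1 ltW.
rewrite diff_grad gy /bregman !(dotvBl, dotvDr); lra.
Qed.

End primal_thermodynamic_function.

(** * Bregman projection onto a stoichiometric class *)

Lemma cluster_closed (T : topologicalType) (F : set_system T) (D : set T) p :
  cluster F p -> closed D -> F D -> D p.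
Proof. by move=> clF cD FD; apply: cD => B pB; exact: clF FD pB. Qed.

Lemma cluster_le (R : realType) (T : topologicalType) (F : set_system T) p
    (g : T -> R) (c : R) :
  cluster F p -> g @ p --> g p -> F [set x | g x <= c] -> g p <= c.
Proof.
move=> clF gp Fg; rewrite leNgt; apply/negP => cg.
have [y [/= gyc]] := clF _ _ Fg (@cvgr_gt R T (nbhs p) _ g (g p) gp c cg).
by rewrite ltNge gyc.
Qed.

Lemma trmx_continuous (R : realType) p q : continuous (@trmx R p q).
Proof.
move=> M B /nbhs_ballP[e e0 MB]; apply/nbhs_ballP; exists e => // N [_ MN].
by apply: MB; split => // i j; rewrite !mxE; exact: MN.
Qed.

Lemma cV_compact (R : realType) n (B : 'I_n -> set R) :
  (forall i, compact (B i)) -> compact [set x : 'cV[R]_n | forall i, B i (x i 0)].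
Proof.
move=> cB.
have -> : [set x : 'cV[R]_n | forall i, B i (x i 0)] =
    trmx @` [set v : 'rV[R]_n | forall i, B i (v ord0 i)].
  apply/seteqP; split => [x Bx|_ [v Bv <-] i]; last by rewrite mxE.
  by exists x^T; [move=> i; rewrite mxE | rewrite trmxK].
apply: continuous_compact; first exact/continuous_subspaceT/trmx_continuous.
exact: rV_compact.
Qed.

Lemma closed_affine_image (R : realType) n m (A : 'M[R]_(n, m)) (x0 : 'cV[R]_n) :
  closed [set x | exists v, x - x0 = A *m v].
Proof.
pose K := cokermx A^T.
have mulK y j : (y^T *m K) 0 j = dotv y (col j K).
  by rewrite /dotv mxE; apply: eq_bigr => i _; rewrite !mxE.
have -> : [set x | exists v, x - x0 = A *m v] =
    \bigcap_(j in setT) [set x | dotv x (col j K) = dotv x0 (col j K)].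
  apply/seteqP; split => x.
    move=> [v xv] j _ /=; apply/eqP; rewrite -subr_eq0 -dotvBl xv -mulK.
    by rewrite trmx_mul -mulmxA mulmx_coker mulmx0 mxE.
  move=> xK; have : ((x - x0)^T <= A^T)%MS.
    rewrite submxE; apply/eqP/matrixP => i j.
    by rewrite (ord1 i) mulK dotvBl (xK j I) subrr mxE.
  by case/submxP => D xD; exists D^T; rewrite -[LHS]trmxK xD trmx_mul trmxK.
apply: closed_bigI => j _.
apply: (@preimage_closed _ _ (fun x => dotv x (col j K)) [set y | y = dotv x0 (col j K)]).
  by move=> x _; exact: dotv_continuous.
exact: closed_eq.
Qed.

Lemma derive1_segment (R : realType) n (g : 'cV[R]_n -> R) (a b : 'cV[R]_n) (l : R) :
  differentiable g (l *: a + (1 - l) *: b) ->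
  derive1 (fun t => g (t *: a + (1 - t) *: b)) l = 'd g (l *: a + (1 - l) *: b) (a - b).
Proof.
move=> dg; rewrite -deriveE // /derive1 /derive.
set z := l *: a + (1 - l) *: b.
suff -> : (fun h => h^-1 *: (g ((h + l) *: a + (1 - (h + l)) *: b) - g z)) =
    (fun h => h^-1 *: ((g \o shift z) (h *: (a - b)) - g z)) by [].
apply/funext => h /=; congr (_ *: (g _ - _)).
by apply/matrixP => i j; rewrite !mxE; ring.
Qed.

Lemma near_right_posorth (R : realType) n (x w : 'cV[R]_n) : posorth n x ->
  \forall t \near (0 : R)^'+, posorth n (x + t *: w).
Proof.
move=> px; apply: filter_forall => i.
have w1 : 0 < `|w i 0| + 1 by rewrite ltr_wpDl.
near=> t.
have t0 : 0 < t by near: t; exact: nbhs_right_gt.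
have : t < x i 0 / (`|w i 0| + 1).
  by near: t; apply: nbhs_right_lt; rewrite divr_gt0.
rewrite ltr_pdivlMr // !mxE.
have wN : - w i 0 <= `|w i 0| by rewrite -normrN ler_norm.
have := ler_norm (w i 0); nra.
Unshelve. all: by end_near. Qed.

Lemma ge0_of_chord_bound (R : realType) (l c d : R) : 0 < l -> 0 <= c ->
  (forall t, 0 < t < l -> (t - l) * d <= t * c) -> 0 <= d.
Proof.
move=> l0 c0 chord; rewrite leNgt; apply/negP => d0.
pose t := l * (- d) / (2 * (c - d)).
have t_cd : t * (c - d) = l * (- d) / 2 by rewrite /t; field; lra.
have t0 : 0 < t by rewrite /t divr_gt0 ?mulr_gt0 //; lra.
have lc0 : 0 <= l * c by exact: mulr_ge0 (ltW l0) c0.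
have tl : t < l by nra.
have := chord t; rewrite t0 tl => /(_ isT); nra.
Qed.

Section bregman_projection.
Variables (R : realType) (n m : nat) (A : 'M[R]_(n, m)) (Phi : 'cV[R]_n -> R).
Variables (xt x0 : 'cV[R]_n).
Hypotheses (thermo_Phi : primal_thermodynamic Phi) (pxt : posorth n xt).
Hypothesis px0 : posorth n x0.

Let f x := bregman Phi x xt.
Let C := [set x | posorth n x /\ exists v, x - x0 = A *m v].
Let I := inf (f @` C).

Lemma x0_in_class : C x0.
Proof. by split => //; exists 0; rewrite subrr mulmx0. Qed.

Lemma bregman_class_lbound : has_lbound (f @` C).
Proof. by exists 0 => _ [x [px _] <-]; exact: bregman_ge0. Qed.

Lemma bregman_class_inf_le x : C x -> I <= f x.
Proof. by move=> Cx; apply: (ge_inf bregman_class_lbound); exists x. Qed.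

Let near_min e := [set x | C x /\ f x < I + e].
Let F := filter_from [set e : R | 0 < e] near_min.

Lemma near_min_proper : ProperFilter F.
Proof.
apply: filter_from_proper; last first.
  have has_inf_C : has_inf (f @` C).
    split; last exact: bregman_class_lbound.
    by exists (f x0); exists x0 => //; exact: x0_in_class.
  by move=> e e0; have [_ [x Cx <-] fx] := inf_adherent e0 has_inf_C; exists x.
apply: filter_from_filter; first by exists 1 => /=.
move=> e e' /= e0 e'0; exists (Num.min e e'); first by rewrite /= lt_min e0.
move=> x [Cx fx]; split; split => //; apply: lt_le_trans fx _.
  by rewrite lerD2l ge_min lexx.
by rewrite lerD2l ge_min lexx orbT.
Qed.

Lemma near_min_cluster :
  exists xs, [/\ cluster F xs, nnegorth n xs & exists v, xs - x0 = A *m v].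
Proof.
have [c coercive] := bregman_coercive thermo_Phi xt.
pose box := [set x : 'cV[R]_n | forall i, `[0, I + 1 + c]%classic (x i 0)].
have box_compact : compact box.
  by apply: (@cV_compact R n (fun=> `[0, I + 1 + c]%classic)) => i; exact: segment_compact.
have F_box : F box.
  exists 1 => [|x [[px _] fx] i /=]; first exact: ltr01.
  have := coercive x i px; have := px i; rewrite /f in fx.
  by rewrite in_itv /= => *; apply/andP; split; lra.
have [xs [box_xs clF]] := box_compact F near_min_proper F_box.
exists xs; split => //.
  by move=> i; have := box_xs i; rewrite /= in_itv /= => /andP[].
apply: (cluster_closed clF (@closed_affine_image R n m A x0)).
by exists 1 => [|x [[_ xv] _]]; first exact: ltr01.
Qed.

Section near_min_cluster_point.
Variable xs : 'cV[R]_n.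
Hypotheses (clF : cluster F xs) (nxs : nnegorth n xs).

Let z (l : R) := l *: x0 + (1 - l) *: xs.

Lemma cluster_bregman_le_inf : posorth n xs -> f xs <= I.
Proof.
move=> pxs; apply/ler_addgt0Pr => e e0; rewrite /f.
apply: (cluster_le clF (bregman_continuous thermo_Phi pxs)).
by exists e => // x [_ fx]; exact: ltW.
Qed.

Lemma bregman_segment_le (l : R) : 0 < l < 1 -> f (z l) <= l * f x0 + (1 - l) * I.
Proof.
move=> /andP[l0 l1].
have pz : posorth n (z l) by apply: posorth_segment; rewrite // l0 ltW.
pose g x := f (l *: x0 + (1 - l) *: x).
have gC : g @ xs --> g xs.
  have cstC : (fun=> l *: x0) @ xs --> l *: x0.
    exact: (@cvg_cst _ _ _ (nbhs xs) (nbhs_filter xs)).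
  have scaleC : (fun x => (1 - l) *: x) @ xs --> (1 - l) *: xs.
    exact: (cvgZl_tmp (@cvg_id _ (nbhs xs))).
  exact: cvg_comp _ _ (cvgD cstC scaleC) (bregman_continuous thermo_Phi pz).
apply/ler_addgt0Pr => e e0.
have e_l : 0 < e / (1 - l) by apply: divr_gt0; lra.
apply: (cluster_le clF gC); exists (e / (1 - l)) => // x [[px _] fx] /=.
have l01 : 0 <= l <= 1 by rewrite !ltW.
apply: le_trans (bregman_convex thermo_Phi xt px0 px l01) _.
have : (1 - l) * f x <= (1 - l) * (I + e / (1 - l)).
  by apply: ler_wpM2l; [lra | exact: ltW].
have : (1 - l) * (e / (1 - l)) = e by field; lra.
rewrite /f; lra.
Qed.

Hypothesis affine_xs : exists v, xs - x0 = A *m v.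

Lemma segment_in_class (l : R) : 0 < l <= 1 -> C (z l).
Proof.
move=> l01; split; first exact: posorth_segment.
have [v xv] := affine_xs; exists ((1 - l) *: v).
by rewrite -scalemxAr -xv; apply/matrixP => i j; rewrite !mxE; ring.
Qed.

Lemma segment_slope_ge (l : R) : 0 < l < 1 ->
  dotv (x0 - xs) (grad Phi xt) <= derive1 (fun t => Phi (z t)) l.
Proof.
move=> /andP[l0 l1].
have pzl : posorth n (z l) by apply: posorth_segment; rewrite // l0 ltW.
rewrite derive1_segment -/(z l); last exact: thermodynamic_differentiable pzl.
rewrite -subr_ge0; apply: (ge0_of_chord_bound l0 (_ : 0 <= f x0 - I)).
  by rewrite subr_ge0; exact: bregman_class_inf_le x0_in_class.
move=> t /andP[t0 tl].
have pzt : posorth n (z t) by apply: posorth_segment => //; rewrite t0; lra.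
have [convex_Phi _ _ _] := thermo_Phi.
have tangent := strictly_convex_tangent_le convex_Phi pzl pzt
  (thermodynamic_differentiable thermo_Phi pzl).
have upper : f (z t) <= t * f x0 + (1 - t) * I by apply: bregman_segment_le; rewrite t0; lra.
have lower : I <= f (z l) by apply/bregman_class_inf_le/segment_in_class; rewrite l0 ltW.
have zlt : z t - z l = (t - l) *: (x0 - xs).
  by apply/matrixP => i j; rewrite !mxE; ring.
have zt : z t - xt = (z l - xt) + (t - l) *: (x0 - xs).
  by apply/matrixP => i j; rewrite !mxE; ring.
move: tangent upper lower; rewrite zlt linearZ /= /f /bregman zt (dotvDl (z l - xt)) dotvZl.
set d := 'd Phi _ _; rewrite -[(t - l) *: d]/((t - l) * d); nra.
Qed.

Lemma cluster_posorth : posorth n xs.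
Proof.
have [_ _ _ boundary] := thermo_Phi.
apply: contrapT => bd_xs.
set K := dotv (x0 - xs) (grad Phi xt).
have slope_lt := cvgrNy_lt (boundary x0 xs px0 nxs bd_xs) K.
have [l [lt_l l01]] : exists l, derive1 (fun t => Phi (z t)) l < K /\ 0 < l < 1.
  apply: (@filter_ex _ _ (at_right_proper_filter 0)); near=> t; split; near: t.
    exact: slope_lt.
  exact: near_right_lt1.
by have := segment_slope_ge l01; rewrite leNgt lt_l.
Unshelve. all: by end_near. Qed.

End near_min_cluster_point.

Lemma class_minimizer_grad xs : C xs -> f xs <= I ->
  A^T *m (grad Phi xs - grad Phi xt) = 0.
Proof.
move=> [pxs [v xv]] fxs; apply: mulmx_tr_eq0 => u.
suff : dotv (A *m u) (grad Phi xt) <= 'd Phi xs (A *m u).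
  by rewrite diff_grad dotvBr subr_ge0.
apply: diff_ge_slope (thermodynamic_differentiable thermo_Phi pxs) _.
near=> t.
have Ct : C (xs + t *: (A *m u)).
  split; first by near: t; exact: near_right_posorth.
  by exists (v + t *: u); rewrite mulmxDr -xv -scalemxAr addrAC.
have shift : xs + t *: (A *m u) - xt = (xs - xt) + t *: (A *m u) by rewrite addrAC.
have := le_trans fxs (bregman_class_inf_le Ct).
by rewrite /f /bregman shift (dotvDl (xs - xt)) dotvZl; lra.
Unshelve. all: by end_near. Qed.

Lemma exists_bregman_projection :
  exists2 x, C x & A^T *m (grad Phi x - grad Phi xt) = 0.
Proof.
have [xs [clF nxs affine_xs]] := near_min_cluster.
have pxs := cluster_posorth clF nxs affine_xs.
have Cxs : C xs by split.
by exists xs => //; apply: class_minimizer_grad Cxs (cluster_bregman_le_inf clF pxs).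
Qed.

End bregman_projection.

(** * Equilibria of the flow *)

Section equilibrium.
Variables (R : realType) (n m : nat) (S : 'M[int]_(n, m)) (Phi : 'cV[R]_n -> R).
Variables (xt x0 : 'cV[R]_n).
Hypothesis thermo_Phi : primal_thermodynamic Phi.
Implicit Types x y : 'cV[R]_n.

(* qualified: plain [realmx] is MathComp's notation [mxOver Num.real] *)
Local Notation A := (Defs.realmx R S).

Lemma Psc_subr x y : Psc S x0 x -> Psc S x0 y -> exists v, x - y = A *m v.
Proof.
move=> [_ [v xv]] [_ [w yw]]; exists (v - w).
by rewrite mulmxBr -xv -yw opprB addrA subrK.
Qed.

Lemma Meq_subr x y : Meq S Phi xt x -> Meq S Phi xt y ->
  A^T *m (grad Phi x - grad Phi y) = 0.
Proof. by move=> [_ Mx] [_ My]; exact: mulmx_subr_eq0 Mx My. Qed.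

Section equilibrium_point.
Variable xd : 'cV[R]_n.
Hypotheses (Psc_xd : Psc S x0 xd) (Meq_xd : Meq S Phi xt xd).

Lemma Psc_bregman_lt x : Psc S x0 x -> x != xd -> bregman Phi xd xt < bregman Phi x xt.
Proof.
move=> Px xxd; have [v xv] := Psc_subr Px Psc_xd.
rewrite (@bregman_pythagoras _ _ _ x xd); last first.
  by rewrite xv; apply: dotv_image_ker; case: Meq_xd.
by rewrite ltrDr; exact: bregman_gt0 Px.1 Psc_xd.1 xxd.
Qed.

Lemma Meq_bregman_lt xq : Meq S Phi xt xq -> xq != xd ->
  bregman Phi x0 xd < bregman Phi x0 xq.
Proof.
move=> Mq xqd; have [v xv] := Psc_xd.2.
have x0xd : x0 - xd = A *m (- v) by rewrite mulmxN -xv opprB.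
rewrite (@bregman_pythagoras _ _ _ x0 xd xq); last first.
  by rewrite x0xd; apply: dotv_image_ker; exact: Meq_subr.
have xdq : xd != xq by rewrite eq_sym.
by rewrite ltrDl; exact: bregman_gt0 Psc_xd.1 Mq.1 xdq.
Qed.

End equilibrium_point.

Lemma Psc_Meq_set1 xd : Psc S x0 xd -> Meq S Phi xt xd ->
  Psc S x0 `&` Meq S Phi xt = [set xd].
Proof.
move=> Pxd Mxd; apply/seteqP; split => [x [Px Mx]|x ->]; last by split.
apply/eqP; apply: contraT => xxd.
have xdx : xd != x by rewrite eq_sym.
have := Psc_bregman_lt Pxd Mxd Px xxd.
by rewrite ltNge ltW // (Psc_bregman_lt Px Mx Pxd xdx).
Qed.

End equilibrium.

Section dissipative_flux.
Variables (R : realType) (n m : nat) (S : 'M[int]_(n, m)) (Phi : 'cV[R]_n -> R).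
Variables (Psi : 'cV[R]_n -> 'cV[R]_m -> R) (xt : 'cV[R]_n).
Hypothesis dissipation_Psi : forall x, posorth n x -> dissipation (Psi x).
Local Notation A := (Defs.realmx R S).

Lemma flux_eq0 x : posorth n x ->
  flux S Phi Psi xt x = 0 <-> A^T *m (grad Phi x - grad Phi xt) = 0.
Proof.
move=> px; have dPsi := dissipation_Psi px; rewrite /flux.
split => [j0|->]; last exact: grad_dissipation0.
by apply: (dotv_grad_dissipation_eq0 dPsi); rewrite j0 dotv0r.
Qed.

Lemma eqflow_eq0 x : posorth n x ->
  eqflow S Phi Psi xt x = 0 <-> A^T *m (grad Phi x - grad Phi xt) = 0.
Proof.
move=> px; rewrite /eqflow; split => [|/(flux_eq0 px)->]; last first.
  by rewrite mulmx0 oppr0.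
move/eqP; rewrite oppr_eq0 => /eqP Aj0.
apply: (dotv_grad_dissipation_eq0 (dissipation_Psi px)).
exact: dotv_mulmx_ker Aj0.
Qed.

Lemma Meq_eq_MDB : Meq S Phi xt = MDB S Phi Psi xt.
Proof. by apply/seteqP; split => x [px xE]; split => //; apply/(flux_eq0 px). Qed.

Lemma steady_state_eq_Meq : steady_state S Phi Psi xt = Meq S Phi xt.
Proof. by apply/seteqP; split => x [px xE]; split => //; apply/(eqflow_eq0 px). Qed.

End dissipative_flux.

Theorem mainTheorem4 (R : realType) (NX Ne : nat) (S : 'M[int]_(NX, Ne))
  (Phi : 'cV[R]_NX -> R) (Psi : 'cV[R]_NX -> 'cV[R]_Ne -> R)
  (xt x0 : 'cV[R]_NX) :
  primal_thermodynamic Phi ->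
  posorth NX xt -> posorth NX x0 ->
  (forall x, posorth NX x -> dissipation (Psi x)) ->
  (exists xdag : 'cV[R]_NX,
     [/\ Psc S x0 `&` Meq S Phi xt = [set xdag],
         Psc S x0 `&` steady_state S Phi Psi xt = [set xdag],
         (Psc S x0 xdag /\ forall x, Psc S x0 x -> x != xdag ->
            bregman Phi xdag xt < bregman Phi x xt) &
         (Meq S Phi xt xdag /\ forall xq, Meq S Phi xt xq -> xq != xdag ->
            bregman Phi x0 xdag < bregman Phi x0 xq)])
  /\ Meq S Phi xt = MDB S Phi Psi xt.
Proof.
move=> thermo_Phi pxt px0 dissipation_Psi.
have [xd Pxd Axd] := exists_bregman_projection (Defs.realmx R S) thermo_Phi pxt px0.
have Mxd : Meq S Phi xt xd by split; [exact: Pxd.1 | exact: Axd].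
have Psc_Meq_xd := Psc_Meq_set1 thermo_Phi Pxd Mxd.
split; last exact: (Meq_eq_MDB S Phi xt dissipation_Psi).
exists xd; split => //.
- by rewrite (steady_state_eq_Meq S Phi xt dissipation_Psi).
- by split=> // x Px; exact: (Psc_bregman_lt thermo_Phi Pxd Mxd Px).
- by split=> // xq Mq; exact: (Meq_bregman_lt thermo_Phi Pxd Mxd Mq).
Qed.
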